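(* Let $K$ be a field and $f\colon R\to S$ a morphism of Zinbiel algebras. If $H^3_{\mathrm{Zinb}}(f,f)=0$, then every $2$-cocycle $\theta_1\in C^2_{\mathrm{Zinb}}(f,f)$ is the infinitesimal of some deformation of $f$.
   Context: A Zinbiel algebra over $K$ is a $K$-vector space $R$ with bilinear product $x\cdot y$ (also written $m_R(x,y)$) satisfying $(x\cdot y)\cdot z=x\cdot(y\cdot z)+x\cdot(z\cdot y)$. A morphism $f\colon R\to S$ is a linear map with $f(x\cdot y)=f(x)\cdot f(y)$. $R$ is a bimodule over itself, $S$ over itself, and $S$ is an $R$-bimodule via $r\cdot s=f(r)\cdot s$, $s\cdot r=s\cdot f(r)$. For a bimodule $A$ over $R$ and $1\le n\le4$, $C^n_{\mathrm{Zinb}}(R,A)=\mathrm{Hom}_K(R^{\otimes n},A)$ with $(d^1\varphi)(x,y)=x\cdot\varphi(y)-\varphi(x\cdot y)+\varphi(x)\cdot y$, $(d^2\varphi)(x,y,z)=x\cdot(\varphi(y,z)+\varphi(z,y))-\varphi(x\cdot y,z)+\varphi(x,y\cdot z+z\cdot y)-\varphi(x,y)\cdot z$, $(d^3\varphi)(x,y,z,w)=x\cdot\{\varphi(y,z,w)-\varphi(z,w,y)+\varphi(z,y,w)-\varphi(w,z,y)\}-\varphi(x\cdot y,z,w)+\varphi(x,y\cdot z+z\cdot y,w)-\varphi(x,y,z\cdot w+w\cdot z)+\varphi(x,y,z)\cdot w$. The deformation complex: $C^0_{\mathrm{Zinb}}(R,S)=0$, $d^0=0$, $C^n_{\mathrm{Zinb}}(f,f)=C^n_{\mathrm{Zinb}}(R,R)\times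 C^n_{\mathrm{Zinb}}(S,S)\times C^{n-1}_{\mathrm{Zinb}}(R,S)$ ($1\le n\le4$), $d^i_f(\xi;\pi;\varphi)=(d^i\xi;d^i\pi;f\xi-\pi f-d^{i-1}\varphi)$ with $(f\xi)(x_1,\dots)=f(\xi(x_1,\dots))$, $(\pi f)(x_1,\dots)=\pi(f(x_1),\dots)$. $H^3_{\mathrm{Zinb}}(f,f)=\ker d^3_f/\operatorname{im}d^2_f$; a $2$-cocycle is an element of $\ker d^2_f$. A deformation of $f$ is a formal power series $\Theta_t=\sum_{i\ge0}\theta_it^i$ with $\theta_0=(m_R;m_S;f)$ and $\theta_i=(m_{R,i};m_{S,i};f_i)\in C^2_{\mathrm{Zinb}}(f,f)$, such that for $*=R,S$ the bilinear map $M_{*,t}=\sum_i m_{*,i}t^i$ satisfies $M_{*,t}(M_{*,t}(x,y),z)=M_{*,t}(x,M_{*,t}(y,z))+M_{*,t}(x,M_{*,t}(z,y))$ for $x,y,z\in *$, and $F_t=\sum_if_it^i$ satisfies $F_t(M_{R,t}(x,y))=M_{S,t}(F_t(x),F_t(y))$ for $x,y\in R$. Its infinitesimal is $\theta_1$. *)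

From HB Require Import structures.
From mathcomp Require Import all_boot all_order all_algebra.
Set Implicit Arguments. Unset Strict Implicit. Unset Printing Implicit Defensive.
Import GRing.Theory.
Local Open Scope ring_scope.

Section ZinbielDefs.
Variable K : fieldType.

(** K-linear and K-multilinear maps (= elements of Hom_K(U^{(x)n}, V)). *)
Definition lin (U V : lmodType K) (g : U -> V) : Prop :=
  forall (a : K) (u v : U), g (a *: u + v) = a *: g u + g v.

Definition ml2 (U V : lmodType K) (g : U -> U -> V) : Prop :=
  (forall x, lin (g x)) /\ (forall y, lin (fun x => g x y)).

Definition ml3 (U V : lmodType K) (g : U -> U -> U -> V) : Prop :=
  (forall y z, lin (fun x => g x y z)) /\ (forall x z, lin (fun y => g x y z)) /\
  (forall x y, lin (g x y)).

Definition zinbiel (U : lmodType K) (m : U -> U -> U) : Prop :=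
  ml2 m /\ forall x y z, m (m x y) z = m x (m y z) + m x (m z y).

Definition zinb_morph (R S : lmodType K) (mR : R -> R -> R) (mS : S -> S -> S)
  (f : R -> S) : Prop :=
  lin f /\ forall x y, f (mR x y) = mS (f x) (f y).

(** Coboundaries d^1, d^2, d^3 of C^*_Zinb(R, A), for a bimodule A over R given
    by the left action [l] and right action [r]; [m] is the product of R. *)
Section Cob.
Variables (R A : lmodType K) (m : R -> R -> R) (l : R -> A -> A) (r : A -> R -> A).

Definition d1 (phi : R -> A) : R -> R -> A :=
  fun x y => l x (phi y) - phi (m x y) + r (phi x) y.

Definition d2 (phi : R -> R -> A) : R -> R -> R -> A :=
  fun x y z => l x (phi y z + phi z y) - phi (m x y) z
               + phi x (m y z + m z y) - r (phi x y) z.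

Definition d3 (phi : R -> R -> R -> A) : R -> R -> R -> R -> A :=
  fun x y z w =>
    l x (phi y z w - phi z w y + phi z y w - phi w z y)
    - phi (m x y) z w + phi x (m y z + m z y) w
    - phi x y (m z w + m w z) + r (phi x y z) w.
End Cob.

Section Deformation.
Variables (R S : lmodType K) (mR : R -> R -> R) (mS : S -> S -> S) (f : R -> S).

(** S as an R-bimodule via f. *)
Definition lf (x : R) (s : S) : S := mS (f x) s.
Definition rf (s : S) (x : R) : S := mS s (f x).

(** H^3_Zinb(f,f) = 0 : every element of ker d^3_f (in C^3(f,f)) lies in im d^2_f. *)
Definition H3_zero : Prop :=
  forall (xi : R -> R -> R -> R) (pi : S -> S -> S -> S) (phi : R -> R -> S),
    ml3 xi -> ml3 pi -> ml2 phi ->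
    (forall x y z w, d3 mR mR mR xi x y z w = 0) ->
    (forall x y z w, d3 mS mS mS pi x y z w = 0) ->
    (forall x y z, f (xi x y z) - pi (f x) (f y) (f z)
                     - d2 mR lf rf phi x y z = 0) ->
    exists (xi2 : R -> R -> R) (pi2 : S -> S -> S) (phi1 : R -> S),
      ml2 xi2 /\ ml2 pi2 /\ lin phi1 /\
      (forall x y z, d2 mR mR mR xi2 x y z = xi x y z) /\
      (forall x y z, d2 mS mS mS pi2 x y z = pi x y z) /\
      (forall x y, f (xi2 x y) - pi2 (f x) (f y) - d1 mR lf rf phi1 x y = phi x y).

(** 2-cocycles of the deformation complex: elements of ker d^2_f. *)
Definition cocycle2 (m1R : R -> R -> R) (m1S : S -> S -> S) (f1 : R -> S) : Prop :=
  ml2 m1R /\ ml2 m1S /\ lin f1 /\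
  (forall x y z, d2 mR mR mR m1R x y z = 0) /\
  (forall x y z, d2 mS mS mS m1S x y z = 0) /\
  (forall x y, f (m1R x y) - m1S (f x) (f y) - d1 mR lf rf f1 x y = 0).

(** Formal deformation Theta_t = sum_i theta_i t^i, theta_i = (MR i; MS i; F i),
    with the power-series identities written coefficientwise (coefficient of t^n). *)
Definition deformation (MR : nat -> R -> R -> R) (MS : nat -> S -> S -> S)
  (F : nat -> R -> S) : Prop :=
  MR 0%N = mR /\ MS 0%N = mS /\ F 0%N = f /\
      (forall i, ml2 (MR i) /\ ml2 (MS i) /\ lin (F i)) /\
      (forall n x y z,
        \sum_(i < n.+1) MR i (MR (n - i)%N x y) z
        = \sum_(i < n.+1) (MR i x (MR (n - i)%N y z) + MR i x (MR (n - i)%N z y))) /\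
      (forall n x y z,
        \sum_(i < n.+1) MS i (MS (n - i)%N x y) z
        = \sum_(i < n.+1) (MS i x (MS (n - i)%N y z) + MS i x (MS (n - i)%N z y))) /\
      (forall n x y,
        \sum_(i < n.+1) F i (MR (n - i)%N x y)
        = \sum_(i < n.+1) \sum_(j < (n - i).+1)
             MS i (F j x) (F (n - i - j)%N y)).

End Deformation.
End ZinbielDefs.

(* A deformation is built one order at a time.  Suppose the components of
   index at most N satisfy the Zinbiel and morphism identities up to order
   t^N, and all higher components vanish.  The t^(N+1)-coefficients of the two
   identities then form a 3-cocycle of the deformation complex, so H^3 = 0
   writes it as d^2 of a 2-cochain; taking that cochain as the components of
   index N+1 removes the obstruction.  The given 2-cocycle supplies order 1,
   and choosing the extensions successively gives the whole series.

   The cocycle property needs no index juggling.  For any biadditive product,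
   d^3 of its Zinbiel associator vanishes identically, and so does the
   analogous combination of associators and the defect of a morphism.  Apply
   these universal identities to the products that M_t and F_t induce on
   series truncated at t^(N+2), evaluate on constant series, and read off the
   coefficient of t^(N+1).  By induction the associator and the defect of
   truncated series vanish below degree N+1, so only the degree-0 parts of the
   other arguments survive, and the identities become exactly the cocycle
   conditions for the obstruction. *)

From HB Require Import structures.
From mathcomp Require Import all_boot all_algebra.
From mathcomp Require Import zify.
From Stdlib Require Import ClassicalEpsilon.
Set Implicit Arguments. Unset Strict Implicit. Unset Printing Implicit Defensive.
Import GRing.Theory.
Local Open Scope ring_scope.

(* [zmod_eq] proves identities in an abelian group between sums and
   differences of arbitrary terms: the atoms are collected up to unification,
   and the identity holds once every atom has total integer coefficient 0. *)
Inductive zterm := ZVar of nat | ZAdd of zterm & zterm | ZOpp of zterm | ZZero.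

Fixpoint zeval (V : zmodType) (env : seq V) (t : zterm) : V :=
  match t with
  | ZVar n => env`_n
  | ZAdd a b => zeval env a + zeval env b
  | ZOpp a => - zeval env a
  | ZZero => 0
  end.

Fixpoint zcoef (t : zterm) (n : nat) : int :=
  match t with
  | ZVar m => (m == n)%:Z
  | ZAdd a b => zcoef a n + zcoef b n
  | ZOpp a => - zcoef a n
  | ZZero => 0
  end.

Lemma zevalE (V : zmodType) (env : seq V) t :
  zeval env t = \sum_(n < size env) env`_n *~ zcoef t n.
Proof.
elim: t => [m|a iha b ihb|a iha|] /=.
- have [lt_m|le_m] := ltnP m (size env).
    rewrite (bigD1 (Ordinal lt_m)) //= eqxx big1 ?addr0 // => i /negPf.
    by rewrite -val_eqE /= eq_sym => ->.
  rewrite nth_default // big1 // => i _.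
  by case: eqP => // eq_m; move: (ltn_ord i); rewrite -eq_m ltnNge le_m.
- by rewrite iha ihb -big_split; apply: eq_bigr => i _; rewrite mulrzDr.
- by rewrite iha -sumrN; apply: eq_bigr => i _; rewrite mulrNz.
- by rewrite big1 // => i _; rewrite mulr0z.
Qed.

Lemma zeval_eq0 (V : zmodType) (env : seq V) t :
  all (fun n => zcoef t n == 0) (iota 0 (size env)) -> zeval env t = 0.
Proof.
move=> /allP t0; rewrite zevalE big1 // => i _.
by rewrite (eqP (t0 i _)) ?mulr0z // mem_iota /=.
Qed.

Ltac zmod_mem t l :=
  match l with
  | nil => constr:(false)
  | cons ?h _ => let _ := match goal with _ => unify t h end in constr:(true)
  | cons _ ?r => zmod_mem t r
  end.

Ltac zmod_index t l :=
  match l with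
  | cons ?h _ => let _ := match goal with _ => unify t h end in constr:(0%N)
  | cons _ ?r => let n := zmod_index t r in constr:(n.+1)
  end.

Ltac zmod_atoms e l :=
  lazymatch e with
  | GRing.add ?a ?b => let l1 := zmod_atoms a l in zmod_atoms b l1
  | GRing.opp ?a => zmod_atoms a l
  | GRing.zero => l
  | _ => let b := zmod_mem e l in
         lazymatch b with true => l | false => constr:(cons e l) end
  end.

Ltac zmod_reify e l :=
  lazymatch e with
  | GRing.add ?a ?b =>
      let ra := zmod_reify a l in let rb := zmod_reify b l in constr:(ZAdd ra rb)
  | GRing.opp ?a => let ra := zmod_reify a l in constr:(ZOpp ra)
  | GRing.zero => constr:(ZZero)
  | _ => let n := zmod_index e l in constr:(ZVar n)
  end.

Ltac zmod_eq :=
  apply/eqP; rewrite -subr_eq0; apply/eqP;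
  lazymatch goal with
  | |- @eq ?V ?e 0 =>
    let l := zmod_atoms e (@nil V) in
    let t := zmod_reify e l in
    change (zeval l t = 0); apply: zeval_eq0; vm_compute; reflexivity
  end.

Section Additive.
Variables (U V : zmodType) (g : U -> V).
Hypothesis gD : {morph g : x y / x + y}.

Lemma additive0 : g 0 = 0.
Proof. by apply: (@addrI _ (g 0)); rewrite -gD !addr0. Qed.

Lemma additiveN : {morph g : x / - x}.
Proof. by move=> x; apply: (@addrI _ (g x)); rewrite -gD !subrr additive0. Qed.

Lemma additive_sum I (r : seq I) (P : pred I) (G : I -> U) :
  g (\sum_(i <- r | P i) G i) = \sum_(i <- r | P i) g (G i).
Proof. exact: (big_morph g gD additive0). Qed.

End Additive.

Definition biadditive (U V : zmodType) (m : U -> U -> V) :=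
  (forall x, {morph m x : y z / y + z}) /\ (forall y, {morph m^~ y : x z / x + z}).

Section Biadditive.
Variables (U V : zmodType) (m : U -> U -> V).
Hypothesis m_biadd : biadditive m.

Lemma biaddDl x y z : m (x + y) z = m x z + m y z. Proof. exact: m_biadd.2. Qed.

Lemma biaddDr x y z : m x (y + z) = m x y + m x z. Proof. exact: m_biadd.1. Qed.

Lemma biaddNl x y : m (- x) y = - m x y.
Proof. exact: (@additiveN _ _ (m^~ y) (fun x z => biaddDl x z y)). Qed.

Lemma biaddNr x y : m x (- y) = - m x y. Proof. exact: (@additiveN _ _ (m x) (m_biadd.1 x)). Qed.

Lemma biadd0l y : m 0 y = 0. Proof. exact: (@additive0 _ _ (m^~ y) (fun x z => biaddDl x z y)). Qed.

Lemma biadd0r x : m x 0 = 0. Proof. exact: (@additive0 _ _ (m x) (m_biadd.1 x)). Qed.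

Lemma biadd_suml I (r : seq I) (P : pred I) (G : I -> U) y :
  m (\sum_(i <- r | P i) G i) y = \sum_(i <- r | P i) m (G i) y.
Proof. exact: (@additive_sum _ _ (m^~ y) (fun x z => biaddDl x z y)). Qed.

Lemma biadd_sumr I (r : seq I) (P : pred I) (G : I -> U) x :
  m x (\sum_(i <- r | P i) G i) = \sum_(i <- r | P i) m x (G i).
Proof. exact: (@additive_sum _ _ (m x) (m_biadd.1 x)). Qed.

End Biadditive.

Section Linear.
Variable K : fieldType.
Implicit Types U V W : lmodType K.

Lemma linD U V (g : U -> V) : lin g -> {morph g : x y / x + y}.
Proof. by move=> g_lin x y; rewrite -{1}[x]scale1r g_lin scale1r. Qed.

Lemma ml2_biadditive U V (m : U -> U -> V) : ml2 m -> biadditive m.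
Proof. by case=> m_lin1 m_lin2; split=> x; apply: linD. Qed.

Lemma lin_comp U V W (g : V -> W) (h : U -> V) : lin g -> lin h -> lin (g \o h).
Proof. by move=> g_lin h_lin a u v /=; rewrite h_lin g_lin. Qed.

Lemma lin_sub U V (g h : U -> V) : lin g -> lin h -> lin (fun x => g x - h x).
Proof. by move=> g_lin h_lin a u v; rewrite g_lin h_lin scalerBr; zmod_eq. Qed.

Lemma lin_opp U V (g : U -> V) : lin g -> lin (fun x => - g x).
Proof. by move=> g_lin a u v; rewrite g_lin scalerN; zmod_eq. Qed.

Lemma lin_sum U V n (G : 'I_n -> U -> V) :
  (forall i, lin (G i)) -> lin (fun x => \sum_(i < n) G i x).
Proof.
by move=> G_lin a u v; rewrite scaler_sumr -big_split; apply: eq_bigr => i _; apply: G_lin.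
Qed.

Lemma lin_zero U V : lin (fun _ : U => 0 : V).
Proof. by move=> a u v; rewrite scaler0 addr0. Qed.

Lemma ml2_zero U V : ml2 (fun _ _ : U => 0 : V).
Proof. by split=> _; apply: lin_zero. Qed.

End Linear.

Lemma sum_if_addn_eq (T : zmodType) n i p (g : nat -> T) : (p < n)%N ->
  \sum_(a < n) (if (i + a == p)%N then g a else 0) = if (i <= p)%N then g (p - i)%N else 0.
Proof.
move=> lt_pn; rewrite -big_mkcond.
rewrite (eq_bigl (fun a : 'I_n => (i <= p)%N && (a == p - i :> nat)%N)) => [|a].
  by rewrite (big_ord1_cond_eq _ g (fun=> i <= p)%N); case: leqP => ? //=; rewrite ifT //; lia.
by apply/eqP/andP; lia.
Qed.

Lemma sum_antidiagonal2 (T : zmodType) n p (G : nat -> nat -> T) : (p < n)%N ->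
  \sum_(a < n) \sum_(i < n) (if (i + a == p)%N then G i a else 0)
  = \sum_(i < p.+1) G i (p - i)%N.
Proof.
move=> lt_pn; rewrite exchange_big (big_ord_widen n (fun i => G i (p - i)%N) lt_pn).
rewrite [RHS]big_mkcond; apply: eq_bigr => i _; exact: sum_if_addn_eq.
Qed.

Lemma sum_antidiagonal3 (T : zmodType) n p (G : nat -> nat -> nat -> T) : (p < n)%N ->
  \sum_(a < n) \sum_(c < n) \sum_(i < n) (if (i + a + c == p)%N then G i a c else 0)
  = \sum_(i < p.+1) \sum_(j < (p - i).+1) G i j (p - i - j)%N.
Proof.
move=> lt_pn; under eq_bigr => a _ do rewrite exchange_big /=.
rewrite exchange_big.
rewrite (big_ord_widen n (fun i => \sum_(j < (p - i).+1) G i j (p - i - j)%N) lt_pn).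
rewrite [RHS]big_mkcond; apply: eq_bigr => i _.
under eq_bigr => a _ do rewrite sum_if_addn_eq //.
rewrite ltnS; case: leqP => [le_ip|lt_pi]; last by rewrite big1 // => a _; rewrite leqNgt ltn_addr.
rewrite (big_ord_widen n (fun j => G i j (p - i - j)%N)) ?[RHS]big_mkcond; last by lia.
apply: eq_bigr => a _; rewrite -subnDA.
by have -> : (i + a <= p)%N = (a < (p - i).+1)%N by lia.
Qed.

Lemma sum_ord_change_ends (T : zmodType) N (G G' : nat -> T) :
  (forall i, (0 < i <= N)%N -> G' i = G i) ->
  \sum_(i < N.+2) G' i = \sum_(i < N.+2) G i + (G' 0%N - G 0%N) + (G' N.+1 - G N.+1).
Proof.
move=> eqG; rewrite -!(big_mkord xpredT) !(big_nat_recl N.+1) //.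
rewrite (big_nat_recr N 0 (fun i => G' i.+1)) // (big_nat_recr N 0 (fun i => G i.+1)) //=.
by rewrite (eq_big_nat _ _ (F2 := fun i => G i.+1) (fun i _ => eqG i.+1 _)); [zmod_eq | lia].
Qed.

Lemma sum_ord_if_eq (T : zmodType) n b (x : T) :
  \sum_(j < n) (if j == b :> nat then x else 0) = if (b < n)%N then x else 0.
Proof. by rewrite -big_mkcond (big_ord1_eq _ (fun=> x)). Qed.

Lemma sum_ord2_single (T : zmodType) n (G : 'I_n -> 'I_n -> T) i0 j0 :
  (forall i j, G i j != 0 -> i = i0 /\ j = j0) ->
  \sum_i \sum_j G i j = G i0 j0.
Proof.
move=> G_single; rewrite (bigD1 i0) //= [X in X + _](bigD1 j0) //=.
rewrite [X in _ + X = _]big1 => [|i ne_i].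
  rewrite [X in _ + X + _ = _]big1 ?addr0 // => j ne_j.
  by apply/eqP/negPn/negP => /G_single[_ eq_j]; rewrite eq_j eqxx in ne_j.
rewrite big1 // => j _; apply/eqP/negPn/negP => /G_single[eq_i _].
by rewrite eq_i eqxx in ne_i.
Qed.

Lemma sum_ord3_single (T : zmodType) n (G : 'I_n -> 'I_n -> 'I_n -> T) i0 j0 l0 :
  (forall i j l, G i j l != 0 -> [/\ i = i0, j = j0 & l = l0]) ->
  \sum_i \sum_j \sum_l G i j l = G i0 j0 l0.
Proof.
move=> G_single; rewrite (sum_ord2_single (G := fun i j => \sum_l G i j l) (i0 := i0) (j0 := j0)).
  rewrite (bigD1 l0) //= big1 ?addr0 // => l ne_l.
  by apply/eqP/negPn/negP => /G_single[_ _ eq_l]; rewrite eq_l eqxx in ne_l.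
move=> i j nz; have [l /G_single[-> -> _] // | G0] := pickP (fun l => G i j l != 0).
suff sum0 : \sum_l G i j l = 0 by rewrite sum0 eqxx in nz.
by rewrite big1 // => l _; apply/eqP/negbFE/G0.
Qed.

Definition zinb_assoc (T : zmodType) (mu nu : T -> T -> T) (x y z : T) :=
  mu (nu x y) z - mu x (nu y z) - mu x (nu z y).

Definition morph_defect (V W : zmodType) (m : V -> V -> V) (n : W -> W -> W) (F : V -> W)
    (x y : V) :=
  F (m x y) - n (F x) (F y).

Section Additivity.
Variables (V W : zmodType) (m : V -> V -> V) (n : W -> W -> W) (F : V -> W).
Hypotheses (m_biadd : biadditive m) (n_biadd : biadditive n) (FD : {morph F : x y / x + y}).

Let expand := (biaddDl m_biadd, biaddDr m_biadd, biaddDl n_biadd, biaddDr n_biadd, FD).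

Lemma zinb_assoc_additive1 y z : {morph (fun x => zinb_assoc m m x y z) : x1 x2 / x1 + x2}.
Proof. by move=> x1 x2; rewrite /zinb_assoc !expand; zmod_eq. Qed.

Lemma zinb_assoc_additive2 x z : {morph zinb_assoc m m x ^~ z : y1 y2 / y1 + y2}.
Proof. by move=> y1 y2; rewrite /zinb_assoc !expand; zmod_eq. Qed.

Lemma zinb_assoc_additive3 x y : {morph zinb_assoc m m x y : z1 z2 / z1 + z2}.
Proof. by move=> z1 z2; rewrite /zinb_assoc !expand; zmod_eq. Qed.

Lemma morph_defect_additive1 y : {morph morph_defect m n F ^~ y : x1 x2 / x1 + x2}.
Proof. by move=> x1 x2; rewrite /morph_defect !expand; zmod_eq. Qed.

Lemma morph_defect_additive2 x : {morph morph_defect m n F x : y1 y2 / y1 + y2}.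
Proof. by move=> y1 y2; rewrite /morph_defect !expand; zmod_eq. Qed.

End Additivity.

Section UniversalIdentities.
Variables (K : fieldType) (R S : lmodType K) (m : R -> R -> R) (n : S -> S -> S) (F : R -> S).
Hypotheses (m_biadd : biadditive m) (n_biadd : biadditive n) (FD : {morph F : x y / x + y}).

Lemma d3_zinb_assoc x y z w : d3 m m m (zinb_assoc m m) x y z w = 0.
Proof.
rewrite /d3 /zinb_assoc.
rewrite ?(biaddDl m_biadd, biaddDr m_biadd, biaddNl m_biadd, biaddNr m_biadd).
zmod_eq.
Qed.

Lemma d2_morph_defect x y z :
  F (zinb_assoc m m x y z) - zinb_assoc n n (F x) (F y) (F z)
  + d2 m (lf n F) (rf n F) (morph_defect m n F) x y z = 0.
Proof.
rewrite /d2 /lf /rf /morph_defect /zinb_assoc.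
rewrite ?(biaddDl m_biadd, biaddDr m_biadd, biaddNl m_biadd, biaddNr m_biadd,
          biaddDl n_biadd, biaddDr n_biadd, biaddNl n_biadd, biaddNr n_biadd, FD, additiveN FD).
zmod_eq.
Qed.

End UniversalIdentities.

(* The coefficients of t^n in the Zinbiel identity of M_t = \sum_i M i t^i and
   in the morphism identity of F_t = \sum_i F i t^i. *)
Definition zinb_assoc_coef (T : zmodType) (M : nat -> T -> T -> T) n x y z :=
  \sum_(i < n.+1) zinb_assoc (M i) (M (n - i)%N) x y z.

Definition morph_defect_coef (V W : zmodType) (MR : nat -> V -> V -> V) (MS : nat -> W -> W -> W)
    (F : nat -> V -> W) n x y :=
  \sum_(i < n.+1) F i (MR (n - i)%N x y)
  - \sum_(i < n.+1) \sum_(j < (n - i).+1) MS i (F j x) (F (n - i - j)%N y).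

Lemma zinb_assoc_coefE (T : zmodType) (M : nat -> T -> T -> T) n x y z :
  zinb_assoc_coef M n x y z
  = \sum_(i < n.+1) M i (M (n - i)%N x y) z
    - \sum_(i < n.+1) (M i x (M (n - i)%N y z) + M i x (M (n - i)%N z y)).
Proof.
by rewrite /zinb_assoc_coef -sumrB; apply: eq_bigr => i _; rewrite /zinb_assoc opprD addrA.
Qed.

Lemma eq_zinb_assoc_coef (T : zmodType) (M M' : nat -> T -> T -> T) n x y z :
  (forall i, (i <= n)%N -> M' i = M i) -> zinb_assoc_coef M' n x y z = zinb_assoc_coef M n x y z.
Proof.
by move=> eqM; apply: eq_bigr => i _; rewrite !eqM //; move: (ltn_ord i); lia.
Qed.

Lemma eq_morph_defect_coef (V W : zmodType) MR MR' MS MS' (F F' : nat -> V -> W) n x y :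
  (forall i, (i <= n)%N -> [/\ MR' i = MR i, MS' i = MS i & F' i = F i]) ->
  morph_defect_coef MR' MS' F' n x y = morph_defect_coef MR MS F n x y.
Proof.
move=> eqM; rewrite /morph_defect_coef; congr (_ - _).
  apply: eq_bigr => i _; have [_ _ ->] := eqM i (leq_ord i).
  by have [-> _ _] := eqM (n - i)%N (leq_subr _ _).
apply: eq_bigr => i _; apply: eq_bigr => j _.
have le_ij : (i + j <= n)%N by move: (ltn_ord i) (ltn_ord j); lia.
have [_ -> _] := eqM i (leq_ord i).
by have [_ _ ->] := eqM j ltac:(lia); have [_ _ ->] := eqM (n - i - j)%N ltac:(lia).
Qed.

Section Multilinearity.
Variable K : fieldType.

Lemma ml3_zinb_assoc_coef (T : lmodType K) (M : nat -> T -> T -> T) n :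
  (forall i, ml2 (M i)) -> ml3 (zinb_assoc_coef M n).
Proof.
move=> M_ml2; split; [|split] => [y z|x z|x y]; apply: lin_sum => i; rewrite /zinb_assoc;
  (apply: lin_sub; first apply: lin_sub).
- exact: (lin_comp ((M_ml2 i).2 z) ((M_ml2 _).2 y)).
- exact: (M_ml2 i).2.
- exact: (M_ml2 i).2.
- exact: (lin_comp ((M_ml2 i).2 z) ((M_ml2 _).1 x)).
- exact: (lin_comp ((M_ml2 i).1 x) ((M_ml2 _).2 z)).
- exact: (lin_comp ((M_ml2 i).1 x) ((M_ml2 _).1 z)).
- exact: (M_ml2 i).1.
- exact: (lin_comp ((M_ml2 i).1 x) ((M_ml2 _).1 y)).
- exact: (lin_comp ((M_ml2 i).1 x) ((M_ml2 _).2 y)).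
Qed.

Lemma ml2_morph_defect_coef (R S : lmodType K) (MR : nat -> R -> R -> R) (MS : nat -> S -> S -> S)
    (F : nat -> R -> S) n :
  (forall i, [/\ ml2 (MR i), ml2 (MS i) & lin (F i)]) ->
  ml2 (fun x y => - morph_defect_coef MR MS F n x y).
Proof.
move=> ml; have MR_ml i : ml2 (MR i) by case: (ml i).
have MS_ml i : ml2 (MS i) by case: (ml i).
have F_lin i : lin (F i) by case: (ml i).
split=> [x|y]; apply: lin_opp; apply: lin_sub; apply: lin_sum => i.
- exact: (lin_comp (F_lin i) ((MR_ml _).1 x)).
- by apply: lin_sum => j; exact: (lin_comp ((MS_ml i).1 _) (F_lin _)).
- exact: (lin_comp (F_lin i) ((MR_ml _).2 y)).
- by apply: lin_sum => j; exact: (lin_comp ((MS_ml i).2 _) (F_lin _)).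
Qed.

End Multilinearity.

Definition set_at (A : Type) (k : nat) (G : nat -> A) (g : A) : nat -> A :=
  fun i => if i == k then g else G i.

Lemma set_at_ne (A : Type) k (G : nat -> A) g i : i != k -> set_at k G g i = G i.
Proof. by rewrite /set_at => /negPf ->. Qed.

Section SetTop.
Variables (K : fieldType) (N : nat).

Lemma zinb_assoc_coef_set_top (T : lmodType K) (M : nat -> T -> T -> T) xi x y z :
  biadditive (M 0%N) -> biadditive xi -> (forall a b, M N.+1 a b = 0) ->
  zinb_assoc_coef (set_at N.+1 M xi) N.+1 x y z
  = zinb_assoc_coef M N.+1 x y z - d2 (M 0%N) (M 0%N) (M 0%N) xi x y z.
Proof.
move=> M0_biadd xi_biadd MN0; rewrite /zinb_assoc_coef.
pose M' := set_at N.+1 M xi.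
rewrite (@sum_ord_change_ends _ N (fun i => zinb_assoc (M i) (M (N.+1 - i)%N) x y z)
                                  (fun i => zinb_assoc (M' i) (M' (N.+1 - i)%N) x y z)); last first.
  by move=> i i_mid; rewrite /M' !set_at_ne //; apply/eqP; lia.
rewrite /M' /set_at /= subn0 subnn eqxx (_ : (0 == N.+1)%N = false) //.
rewrite /zinb_assoc /d2 !MN0 (biadd0l M0_biadd) !(biadd0r M0_biadd).
rewrite ?(biaddDr M0_biadd, biaddDr xi_biadd); zmod_eq.
Qed.

Lemma morph_defect_coef_set_top (R S : lmodType K) (MR : nat -> R -> R -> R)
    (MS : nat -> S -> S -> S) (F : nat -> R -> S) xi pi phi x y :
  biadditive (MS 0%N) -> {morph F 0%N : a b / a + b} ->
  (forall a b, MR N.+1 a b = 0) -> (forall a b, MS N.+1 a b = 0) -> (forall a, F N.+1 a = 0) ->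
  morph_defect_coef (set_at N.+1 MR xi) (set_at N.+1 MS pi) (set_at N.+1 F phi) N.+1 x y
  = morph_defect_coef MR MS F N.+1 x y
    + (F 0%N (xi x y) - pi (F 0%N x) (F 0%N y)
       - d1 (MR 0%N) (lf (MS 0%N) (F 0%N)) (rf (MS 0%N) (F 0%N)) phi x y).
Proof.
move=> MS0_biadd F0_add MRN0 MSN0 FN0.
pose MR' := set_at N.+1 MR xi; pose MS' := set_at N.+1 MS pi; pose F' := set_at N.+1 F phi.
rewrite /morph_defect_coef.
rewrite (@sum_ord_change_ends _ N (fun i => F i (MR (N.+1 - i)%N x y))
                                  (fun i => F' i (MR' (N.+1 - i)%N x y))); last first.
  by move=> i i_mid; rewrite /MR' /F' !set_at_ne //; apply/eqP; lia.
rewrite (@sum_ord_change_ends _ N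
  (fun i => \sum_(j < (N.+1 - i).+1) MS i (F j x) (F (N.+1 - i - j)%N y))
  (fun i => \sum_(j < (N.+1 - i).+1) MS' i (F' j x) (F' (N.+1 - i - j)%N y))); last first.
  move=> i i_mid; apply: eq_bigr => j _; move: (ltn_ord j) => lt_j.
  by rewrite /MS' /F' !set_at_ne //; apply/eqP; lia.
rewrite subn0 subnn !big_ord1 subn0.
rewrite (@sum_ord_change_ends _ N (fun j => MS 0%N (F j x) (F (N.+1 - j)%N y))
                                  (fun j => MS' 0%N (F' j x) (F' (N.+1 - j)%N y))); last first.
  by move=> j j_mid; rewrite /F' !set_at_ne //; apply/eqP; lia.
rewrite /MR' /MS' /F' /set_at /= subn0 subnn eqxx (_ : (0 == N.+1)%N = false) //.
rewrite MRN0 MSN0 !FN0 (additive0 F0_add) (biadd0l MS0_biadd) (biadd0r MS0_biadd).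
rewrite /d1 /lf /rf; zmod_eq.
Qed.

End SetTop.

Lemma ffunDE (aT : finType) (T : zmodType) (f g : {ffun aT -> T}) x : (f + g) x = f x + g x.
Proof. by rewrite ffunE. Qed.

Lemma ffunNE (aT : finType) (T : zmodType) (f : {ffun aT -> T}) x : (- f) x = - f x.
Proof. by rewrite ffunE. Qed.

(* Series truncated at t^(N+2), as coefficient vectors; [series_mul M] and
   [series_map F] are the product and the map induced by M_t and F_t. *)
Section TruncatedSeries.
Variable N : nat.
Local Notation series T := {ffun 'I_N.+2 -> T}.

Definition monomial (T : zmodType) (k : nat) (x : T) : series T :=
  [ffun j : 'I_N.+2 => if j == k :> nat then x else 0].

Definition top_degree (T : zmodType) (X : series T) :=
  forall k : 'I_N.+2, (k <= N)%N -> X k = 0.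

Lemma monomial_coef0 (T : zmodType) (x : T) : monomial 0 x ord0 = x.
Proof. by rewrite ffunE. Qed.

Lemma series_decomp (T : zmodType) (U : series T) : U = \sum_(b < N.+2) monomial b (U b).
Proof.
apply/ffunP => k; rewrite sum_ffunE (bigD1 k) //= ffunE eqxx big1 ?addr0 // => b ne_b.
by rewrite ffunE; case: eqP => // /val_inj eq_k; rewrite eq_k eqxx in ne_b.
Qed.

Lemma top_degreeD (T : zmodType) (X Y : series T) :
  top_degree X -> top_degree Y -> top_degree (X + Y).
Proof. by move=> X_top Y_top k le_kN; rewrite ffunDE X_top ?Y_top ?addr0. Qed.

Lemma top_degreeN (T : zmodType) (X : series T) : top_degree X -> top_degree (- X).
Proof. by move=> X_top k le_kN; rewrite ffunNE X_top ?oppr0. Qed.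

Section Product.
Variables (T : zmodType) (M : nat -> T -> T -> T).
Hypothesis M_biadd : forall i, biadditive (M i).

Definition series_mul (U X : series T) : series T :=
  [ffun k : 'I_N.+2 => \sum_(i < N.+2) \sum_(j < N.+2) \sum_(l < N.+2)
     (if (i + j + l == k)%N then M i (U j) (X l) else 0)].

Lemma series_mul_biadditive : biadditive series_mul.
Proof.
split=> [U X Y|Y U X]; apply/ffunP => k; rewrite !ffunE -!big_split;
  apply: eq_bigr => i _; rewrite -big_split; apply: eq_bigr => j _;
  rewrite -big_split; apply: eq_bigr => l _; rewrite ffunE /=.
  by rewrite biaddDr //; case: ifP; rewrite ?addr0.
by rewrite biaddDl //; case: ifP; rewrite ?addr0.
Qed.

Lemma series_mul_monomial b c u v :
  series_mul (monomial b u) (monomial c v) = \sum_(a < N.+2) monomial (a + b + c) (M a u v).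
Proof.
apply/ffunP => k; rewrite ffunE sum_ffunE; apply: eq_bigr => i _; rewrite ffunE.
transitivity (\sum_(j < N.+2) (if j == b :> nat then \sum_(l < N.+2) (if l == c :> nat
   then (if (i + b + c == k)%N then M i u v else 0) else 0) else 0)).
  apply: eq_bigr => j _; have [eq_j | ne_j] := eqVneq (j : nat) b; last first.
    by rewrite big1 // => l _; rewrite !ffunE (negPf ne_j) biadd0l ?if_same.
  apply: eq_bigr => l _; rewrite !ffunE eq_j eqxx.
  by have [-> | ne_l] := eqVneq (l : nat) c; rewrite ?biadd0r ?if_same.
rewrite !sum_ord_if_eq [X in _ = if X then _ else _]eq_sym.
case: eqP => [eq_k | _]; last by rewrite !if_same.
by rewrite !ifT //; move: (ltn_ord k); lia.
Qed.

Lemma series_mul_coef0 U X : series_mul U X ord0 = M 0%N (U ord0) (X ord0).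
Proof.
rewrite ffunE (sum_ord3_single (i0 := ord0) (j0 := ord0) (l0 := ord0)) // => i j l.
case: ifP => [/eqP /= sum0 _ | _]; last by rewrite eqxx.
by split; apply: val_inj => /=; lia.
Qed.

Lemma series_mul_top_r U X : top_degree X -> series_mul U X ord_max = M 0%N (U ord0) (X ord_max).
Proof.
move=> X_top; rewrite ffunE (sum_ord3_single (i0 := ord0) (j0 := ord0) (l0 := ord_max)) /=.
rewrite ?add0n ?eqxx //.
move=> i j l; case: ifP => [/eqP /= sum_top | _]; last by rewrite eqxx.
have [le_lN | lt_Nl] := leqP l N; first by rewrite X_top // (biadd0r (M_biadd _)) eqxx.
by move=> _; split; apply: val_inj => /=; move: (ltn_ord l); lia.
Qed.

Lemma series_mul_top_l U X : top_degree X -> series_mul X U ord_max = M 0%N (X ord_max) (U ord0).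
Proof.
move=> X_top; rewrite ffunE (sum_ord3_single (i0 := ord0) (j0 := ord_max) (l0 := ord0)) /=.
rewrite ?add0n ?addn0 ?eqxx //.
move=> i j l; case: ifP => [/eqP /= sum_top | _]; last by rewrite eqxx.
have [le_jN | lt_Nj] := leqP j N; first by rewrite X_top // (biadd0l (M_biadd _)) eqxx.
by move=> _; split; apply: val_inj => /=; move: (ltn_ord j); lia.
Qed.

End Product.

Section Map.
Variables (V W : zmodType) (F : nat -> V -> W).
Hypothesis F_add : forall i, {morph F i : x y / x + y}.

Definition series_map (U : series V) : series W :=
  [ffun k : 'I_N.+2 => \sum_(i < N.+2) \sum_(j < N.+2)
     (if (i + j == k)%N then F i (U j) else 0)].

Lemma series_mapD : {morph series_map : U X / U + X}.
Proof.
move=> U X; apply/ffunP => k; rewrite !ffunE -big_split; apply: eq_bigr => i _.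
rewrite -big_split; apply: eq_bigr => j _; rewrite ffunE /= F_add.
by case: ifP; rewrite ?addr0.
Qed.

Lemma series_map_monomial b u :
  series_map (monomial b u) = \sum_(a < N.+2) monomial (a + b) (F a u).
Proof.
apply/ffunP => k; rewrite ffunE sum_ffunE; apply: eq_bigr => i _; rewrite ffunE.
transitivity (\sum_(j < N.+2) (if j == b :> nat then
   (if (i + b == k)%N then F i u else 0) else 0)).
  apply: eq_bigr => j _; rewrite ffunE.
  by have [-> | ne_j] := eqVneq (j : nat) b; rewrite ?(additive0 (F_add i)) ?if_same.
rewrite sum_ord_if_eq [X in _ = if X then _ else _]eq_sym.
case: eqP => [eq_k | _]; last by rewrite !if_same.
by rewrite !ifT //; move: (ltn_ord k); lia.
Qed.

Lemma series_map_coef0 U : series_map U ord0 = F 0%N (U ord0).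
Proof.
rewrite ffunE (sum_ord2_single (i0 := ord0) (j0 := ord0)) // => i j.
case: ifP => [/eqP /= sum0 _ | _]; last by rewrite eqxx.
by split; apply: val_inj => /=; lia.
Qed.

Lemma series_map_top X : top_degree X -> series_map X ord_max = F 0%N (X ord_max).
Proof.
move=> X_top; rewrite ffunE (sum_ord2_single (i0 := ord0) (j0 := ord_max)) /= ?add0n ?eqxx //.
move=> i j; case: ifP => [/eqP /= sum_top | _]; last by rewrite eqxx.
have [le_jN | lt_Nj] := leqP j N; first by rewrite X_top // (additive0 (F_add _)) eqxx.
by move=> _; split; apply: val_inj => /=; move: (ltn_ord j); lia.
Qed.

End Map.

Lemma monomialD (T : zmodType) k : {morph @monomial T k : x y / x + y}.
Proof. by move=> x y; apply/ffunP => j; rewrite !ffunE; case: ifP; rewrite ?addr0. Qed.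

Lemma monomial_sum2_coef (T : zmodType) s (G : nat -> nat -> T) (k : 'I_N.+2) :
  (\sum_(a < N.+2) \sum_(i < N.+2) monomial (i + a + s) (G i a)) k
  = if (s <= k)%N then \sum_(i < (k - s).+1) G i (k - s - i)%N else 0.
Proof.
rewrite sum_ffunE; under eq_bigr do rewrite sum_ffunE;
  under eq_bigr do under eq_bigr do rewrite ffunE.
case: leqP => [le_sk | lt_ks]; last first.
  by rewrite big1 // => a _; rewrite big1 // => i _; rewrite ifF //; apply/eqP; lia.
rewrite -(sum_antidiagonal2 (n := N.+2)); last by move: (ltn_ord k); lia.
by apply: eq_bigr => a _; apply: eq_bigr => i _; congr (if _ then _ else _); apply/eqP/eqP; lia.
Qed.

Lemma monomial_sum3_coef (T : zmodType) s (G : nat -> nat -> nat -> T) (k : 'I_N.+2) :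
  (\sum_(a < N.+2) \sum_(c < N.+2) \sum_(i < N.+2) monomial (i + a + c + s) (G i a c)) k
  = if (s <= k)%N then \sum_(i < (k - s).+1) \sum_(j < (k - s - i).+1) G i j (k - s - i - j)%N
    else 0.
Proof.
rewrite sum_ffunE; under eq_bigr do rewrite sum_ffunE;
  under eq_bigr do under eq_bigr do rewrite sum_ffunE;
  under eq_bigr do under eq_bigr do under eq_bigr do rewrite ffunE.
case: leqP => [le_sk | lt_ks]; last first.
  rewrite big1 // => a _; rewrite big1 // => c _; rewrite big1 // => i _.
  by rewrite ifF //; apply/eqP; lia.
rewrite -(sum_antidiagonal3 (n := N.+2)); last by move: (ltn_ord k); lia.
apply: eq_bigr => a _; apply: eq_bigr => c _; apply: eq_bigr => i _.
by congr (if _ then _ else _); apply/eqP/eqP; lia.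
Qed.

Section SeriesAssociator.
Variables (T : zmodType) (M : nat -> T -> T -> T).
Hypothesis M_biadd : forall i, biadditive (M i).
Local Notation mu := (@series_mul T M).
Let mu_biadd := @series_mul_biadditive T M M_biadd.

Lemma series_zinb_assoc_monomial b c l u v w :
  zinb_assoc mu mu (monomial b u) (monomial c v) (monomial l w)
  = \sum_(a < N.+2) \sum_(i < N.+2) monomial (i + a + (b + c + l)) (zinb_assoc (M i) (M a) u v w).
Proof.
rewrite /zinb_assoc !series_mul_monomial // (biadd_suml mu_biadd) !(biadd_sumr mu_biadd).
rewrite -!sumrB; apply: eq_bigr => a _; rewrite !series_mul_monomial //.
rewrite -!sumrB; apply: eq_bigr => i _.
rewrite !monomialD !(additiveN (monomialD _)).
by congr (monomial _ _ - monomial _ _ - monomial _ _); lia.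
Qed.

Lemma series_zinb_assoc_coef U X Y (k : 'I_N.+2) :
  zinb_assoc mu mu U X Y k = \sum_(b < N.+2) \sum_(c < N.+2) \sum_(l < N.+2)
    (if (b + c + l <= k)%N then zinb_assoc_coef M (k - (b + c + l)) (U b) (X c) (Y l) else 0).
Proof.
rewrite {1}(series_decomp U) {1}(series_decomp X) {1}(series_decomp Y).
rewrite (additive_sum (zinb_assoc_additive1 mu_biadd _ _)) sum_ffunE; apply: eq_bigr => b _.
rewrite (additive_sum (zinb_assoc_additive2 mu_biadd _ _)) sum_ffunE; apply: eq_bigr => c _.
rewrite (additive_sum (zinb_assoc_additive3 mu_biadd _ _)) sum_ffunE; apply: eq_bigr => l _.
rewrite series_zinb_assoc_monomial.
by rewrite (@monomial_sum2_coef T _ (fun i a => zinb_assoc (M i) (M a) _ _ _)).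
Qed.

Hypothesis low_zinb_assoc_coef : forall p u v w, (p <= N)%N -> zinb_assoc_coef M p u v w = 0.

Lemma series_zinb_assoc_top_degree U X Y : top_degree (zinb_assoc mu mu U X Y).
Proof.
move=> k le_kN; rewrite series_zinb_assoc_coef big1 // => b _; rewrite big1 // => c _.
by rewrite big1 // => l _; case: ifP => // _; apply: low_zinb_assoc_coef; lia.
Qed.

Lemma series_zinb_assoc_top U X Y :
  zinb_assoc mu mu U X Y ord_max = zinb_assoc_coef M N.+1 (U ord0) (X ord0) (Y ord0).
Proof.
rewrite series_zinb_assoc_coef (sum_ord3_single (i0 := ord0) (j0 := ord0) (l0 := ord0)) /=.
rewrite ?subn0 //.
move=> b c l; case: leqP => [le_s | _]; last by rewrite eqxx.
have [s0 | s_pos] := eqVneq (b + c + l)%N 0%N.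
  by move=> _; split; apply: val_inj => /=; lia.
by rewrite low_zinb_assoc_coef ?eqxx //; lia.
Qed.

End SeriesAssociator.

Section SeriesMorphism.
Variables (V W : zmodType) (MR : nat -> V -> V -> V) (MS : nat -> W -> W -> W) (F : nat -> V -> W).
Hypotheses (MR_biadd : forall i, biadditive (MR i)) (MS_biadd : forall i, biadditive (MS i))
  (F_add : forall i, {morph F i : x y / x + y}).
Local Notation muR := (@series_mul V MR).
Local Notation muS := (@series_mul W MS).
Local Notation FF := (@series_map V W F).
Let muR_biadd := @series_mul_biadditive V MR MR_biadd.
Let muS_biadd := @series_mul_biadditive W MS MS_biadd.

Lemma series_morph_defect_monomial b d u v :
  morph_defect muR muS FF (monomial b u) (monomial d v)
  = \sum_(a < N.+2) \sum_(i < N.+2) monomial (i + a + (b + d)) (F i (MR a u v))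
    - \sum_(a < N.+2) \sum_(c < N.+2) \sum_(i < N.+2)
        monomial (i + a + c + (b + d)) (MS i (F a u) (F c v)).
Proof.
rewrite /morph_defect series_mul_monomial // !series_map_monomial //.
rewrite (additive_sum (series_mapD F_add)) (biadd_suml muS_biadd).
congr (_ - _); apply: eq_bigr => a _.
  rewrite series_map_monomial //; apply: eq_bigr => i _; congr monomial; lia.
rewrite (biadd_sumr muS_biadd); apply: eq_bigr => c _.
rewrite series_mul_monomial //; apply: eq_bigr => i _; congr monomial; lia.
Qed.

Lemma series_morph_defect_coef U X (k : 'I_N.+2) :
  morph_defect muR muS FF U X k = \sum_(b < N.+2) \sum_(d < N.+2)
    (if (b + d <= k)%N then morph_defect_coef MR MS F (k - (b + d)) (U b) (X d) else 0).
Proof.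
have FF_add := @series_mapD V W F F_add.
rewrite {1}(series_decomp U) {1}(series_decomp X).
rewrite (additive_sum (morph_defect_additive1 muR_biadd muS_biadd FF_add _)) sum_ffunE.
apply: eq_bigr => b _.
rewrite (additive_sum (morph_defect_additive2 muR_biadd muS_biadd FF_add _)) sum_ffunE.
apply: eq_bigr => d _.
rewrite series_morph_defect_monomial ffunDE ffunNE.
rewrite (@monomial_sum2_coef W _ (fun i a => F i (MR a _ _))).
rewrite (@monomial_sum3_coef W _ (fun i a c => MS i (F a _) (F c _))).
by case: ifP; rewrite ?subr0.
Qed.

Hypothesis low_morph_defect_coef : forall p u v, (p <= N)%N -> morph_defect_coef MR MS F p u v = 0.

Lemma series_morph_defect_top_degree U X : top_degree (morph_defect muR muS FF U X).
Proof.
move=> k le_kN; rewrite series_morph_defect_coef big1 // => b _; rewrite big1 // => d _.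
by case: ifP => // _; apply: low_morph_defect_coef; lia.
Qed.

Lemma series_morph_defect_top U X :
  morph_defect muR muS FF U X ord_max = morph_defect_coef MR MS F N.+1 (U ord0) (X ord0).
Proof.
rewrite series_morph_defect_coef (sum_ord2_single (i0 := ord0) (j0 := ord0)) /= ?subn0 //.
move=> b d; case: leqP => [le_s | _]; last by rewrite eqxx.
have [s0 | s_pos] := eqVneq (b + d)%N 0%N.
  by move=> _; split; apply: val_inj => /=; lia.
by rewrite low_morph_defect_coef ?eqxx //; lia.
Qed.

End SeriesMorphism.

End TruncatedSeries.

Section ObstructionCocycle.
Variables (K : fieldType) (N : nat).
Local Notation series T := {ffun 'I_N.+2 -> T}.
Local Notation monomial := (monomial N).

Section Associativity.
Variables (T : lmodType K) (M : nat -> T -> T -> T).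
Hypothesis M_biadd : forall i, biadditive (M i).
Local Notation mu := (@series_mul N T M).

Lemma d3_series_top (Phi : series T -> series T -> series T -> series T)
    (phi : T -> T -> T -> T) :
  (forall U X Y, top_degree (Phi U X Y)) ->
  (forall U X Y, Phi U X Y ord_max = phi (U ord0) (X ord0) (Y ord0)) ->
  forall x y z w,
  d3 mu mu mu Phi (monomial 0 x) (monomial 0 y) (monomial 0 z) (monomial 0 w) ord_max
  = d3 (M 0%N) (M 0%N) (M 0%N) phi x y z w.
Proof.
move=> Phi_top PhiE x y z w; rewrite /d3 !ffunDE !ffunNE.
rewrite series_mul_top_r //; last by do !(apply: top_degreeD || apply: top_degreeN).
rewrite series_mul_top_l // !ffunDE !ffunNE !PhiE !ffunDE !series_mul_coef0 //.
by rewrite !monomial_coef0.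
Qed.

Hypothesis low_zinb_assoc_coef : forall p u v w, (p <= N)%N -> zinb_assoc_coef M p u v w = 0.

Lemma d3_zinb_assoc_coef x y z w :
  d3 (M 0%N) (M 0%N) (M 0%N) (zinb_assoc_coef M N.+1) x y z w = 0.
Proof.
rewrite -(d3_series_top (series_zinb_assoc_top_degree M_biadd low_zinb_assoc_coef)
                        (series_zinb_assoc_top M_biadd low_zinb_assoc_coef)).
by rewrite d3_zinb_assoc ?ffunE //; apply: series_mul_biadditive.
Qed.

End Associativity.

Section Morphism.
Variables (R S : lmodType K) (MR : nat -> R -> R -> R) (MS : nat -> S -> S -> S)
  (F : nat -> R -> S).
Hypotheses (MR_biadd : forall i, biadditive (MR i)) (MS_biadd : forall i, biadditive (MS i))
  (F_add : forall i, {morph F i : x y / x + y}).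
Local Notation muR := (@series_mul N R MR).
Local Notation muS := (@series_mul N S MS).
Local Notation FF := (@series_map N R S F).

Lemma d2_series_top (Psi : series R -> series R -> series S) (psi : R -> R -> S) :
  (forall U X, top_degree (Psi U X)) ->
  (forall U X, Psi U X ord_max = psi (U ord0) (X ord0)) ->
  forall x y z,
  d2 muR (lf muS FF) (rf muS FF) Psi (monomial 0 x) (monomial 0 y) (monomial 0 z) ord_max
  = d2 (MR 0%N) (lf (MS 0%N) (F 0%N)) (rf (MS 0%N) (F 0%N)) psi x y z.
Proof.
move=> Psi_top PsiE x y z; rewrite /d2 /lf /rf !ffunDE !ffunNE.
rewrite series_mul_top_r //; last exact: top_degreeD.
rewrite series_mul_top_l // !ffunDE !PsiE !ffunDE !series_mul_coef0 //.
by rewrite !series_map_coef0 // !monomial_coef0.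
Qed.

Hypotheses (lowR : forall p u v w, (p <= N)%N -> zinb_assoc_coef MR p u v w = 0)
  (lowS : forall p u v w, (p <= N)%N -> zinb_assoc_coef MS p u v w = 0)
  (lowF : forall p u v, (p <= N)%N -> morph_defect_coef MR MS F p u v = 0).

Lemma d2_morph_defect_coef x y z :
  F 0%N (zinb_assoc_coef MR N.+1 x y z) - zinb_assoc_coef MS N.+1 (F 0%N x) (F 0%N y) (F 0%N z)
  - d2 (MR 0%N) (lf (MS 0%N) (F 0%N)) (rf (MS 0%N) (F 0%N))
       (fun a b => - morph_defect_coef MR MS F N.+1 a b) x y z = 0.
Proof.
have muR_biadd := @series_mul_biadditive N R MR MR_biadd.
have muS_biadd := @series_mul_biadditive N S MS MS_biadd.
have FF_add := @series_mapD N R S F F_add.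
have E_top := series_morph_defect_top_degree MR_biadd MS_biadd F_add lowF.
have E_topE := series_morph_defect_top MR_biadd MS_biadd F_add lowF.
have := congr1 (fun X : series S => X ord_max)
  (d2_morph_defect muR_biadd muS_biadd FF_add (monomial 0 x) (monomial 0 y) (monomial 0 z)).
rewrite /= [RHS]ffunE ffunDE (d2_series_top E_top E_topE) ffunDE ffunNE.
rewrite (series_map_top F_add (series_zinb_assoc_top_degree MR_biadd lowR _ _ _)).
rewrite (series_zinb_assoc_top MR_biadd lowR) (series_zinb_assoc_top MS_biadd lowS).
rewrite !series_map_coef0 !monomial_coef0.
rewrite /d2 /lf /rf => <-.
rewrite ?(biaddDr (MS_biadd 0%N), biaddNr (MS_biadd 0%N), biaddNl (MS_biadd 0%N)).
zmod_eq.
Qed.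

End Morphism.
End ObstructionCocycle.

Section Construction.
Variables (K : fieldType) (R S : lmodType K) (mR : R -> R -> R) (mS : S -> S -> S) (f : R -> S).

Record family := Family {
  famR : nat -> R -> R -> R;
  famS : nat -> S -> S -> S;
  famF : nat -> R -> S }.

Record cochain2 := Cochain2 { coR : R -> R -> R; coS : S -> S -> S; coF : R -> S }.

Definition set_family k (D : family) (c : cochain2) : family :=
  Family (set_at k (famR D) (coR c)) (set_at k (famS D) (coS c)) (set_at k (famF D) (coF c)).

Definition zero_family : family :=
  Family (fun _ _ _ => 0) (fun _ _ _ => 0) (fun _ _ => 0).

Definition undeformed : family := set_family 0 zero_family (Cochain2 mR mS f).

Definition family_ml (D : family) :=
  forall i, [/\ ml2 (famR D i), ml2 (famS D i) & lin (famF D i)].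

Definition coef_identities n (D : family) :=
  [/\ forall x y z, zinb_assoc_coef (famR D) n x y z = 0,
      forall x y z, zinb_assoc_coef (famS D) n x y z = 0
    & forall x y, morph_defect_coef (famR D) (famS D) (famF D) n x y = 0].

(* Components above N vanish, so the coefficients of order N+1 measure the
   obstruction to extending D. *)
Record deformation_upto (N : nat) (D : family) : Prop := {
  famR0 : famR D 0%N = mR;
  famS0 : famS D 0%N = mS;
  famF0 : famF D 0%N = f;
  fam_ml : family_ml D;
  fam_high : forall i, (N < i)%N ->
    [/\ forall x y, famR D i x y = 0, forall x y, famS D i x y = 0 & forall x, famF D i x = 0];
  fam_coef : forall n, (n <= N)%N -> coef_identities n D }.

Record extension (N : nat) (D : family) (c : cochain2) : Prop := {
  ext_ml : [/\ ml2 (coR c), ml2 (coS c) & lin (coF c)];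
  ext_R : forall x y z, d2 mR mR mR (coR c) x y z = zinb_assoc_coef (famR D) N.+1 x y z;
  ext_S : forall x y z, d2 mS mS mS (coS c) x y z = zinb_assoc_coef (famS D) N.+1 x y z;
  ext_F : forall x y, f (coR c x y) - coS c (f x) (f y) - d1 mR (lf mS f) (rf mS f) (coF c) x y
                      = - morph_defect_coef (famR D) (famS D) (famF D) N.+1 x y }.

Lemma set_family_ne k D c i : i != k ->
  [/\ famR (set_family k D c) i = famR D i, famS (set_family k D c) i = famS D i
    & famF (set_family k D c) i = famF D i].
Proof. by move=> ne_ik; rewrite /= !set_at_ne. Qed.

Lemma set_family_eq k D c :
  [/\ famR (set_family k D c) k = coR c, famS (set_family k D c) k = coS c
    & famF (set_family k D c) k = coF c].
Proof. by rewrite /= /set_at eqxx. Qed.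

Lemma coef_identities_eq n D D' :
  (forall i, (i <= n)%N ->
     [/\ famR D' i = famR D i, famS D' i = famS D i & famF D' i = famF D i]) ->
  coef_identities n D -> coef_identities n D'.
Proof.
move=> eqD [coefR coefS coefF]; split=> [x y z|x y z|x y].
- by rewrite (@eq_zinb_assoc_coef _ (famR D)) // => i /eqD[].
- by rewrite (@eq_zinb_assoc_coef _ (famS D)) // => i /eqD[].
- by rewrite (@eq_morph_defect_coef _ _ (famR D) _ (famS D) _ (famF D)).
Qed.

Lemma deformation_upto_set N D c :
  deformation_upto N D -> extension N D c -> deformation_upto N.+1 (set_family N.+1 D c).
Proof.
case=> R0 S0 F0 D_ml high coef [[cR_ml cS_ml cF_lin] d2cR d2cS d1cF].
have [highR highS highF] := high N.+1 (ltnSn N).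
have mR_biadd : biadditive mR by rewrite -R0; apply: ml2_biadditive; case: (D_ml 0%N).
have mS_biadd : biadditive mS by rewrite -S0; apply: ml2_biadditive; case: (D_ml 0%N).
have f_add : {morph f : x y / x + y} by rewrite -F0; apply: linD; case: (D_ml 0%N).
have [setR setS setF] := set_family_eq N.+1 D c.
split; rewrite ?(set_family_ne _ _ (_ : 0 != N.+1)%N) //.
- move=> i; have [-> | ne_i] := eqVneq i N.+1; first by rewrite setR setS setF.
  by have [-> -> ->] := set_family_ne D c ne_i; apply: D_ml.
- move=> i lt_i; have [|-> -> ->] := @set_family_ne N.+1 D c i.
    by rewrite neq_ltn lt_i orbT.
  by apply: high; lia.
move=> n; rewrite leq_eqVlt ltnS => /orP[/eqP -> | le_nN]; last first.
  apply: coef_identities_eq (coef n le_nN) => i le_in; apply: set_family_ne.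
  by rewrite neq_ltn; apply/orP; left; lia.
split=> [x y z|x y z|x y] /=.
- by rewrite zinb_assoc_coef_set_top ?R0 ?d2cR ?subrr //; apply: ml2_biadditive.
- by rewrite zinb_assoc_coef_set_top ?S0 ?d2cS ?subrr //; apply: ml2_biadditive.
- by rewrite morph_defect_coef_set_top ?R0 ?S0 ?F0 ?d1cF ?subrr.
Qed.

Lemma extension_exists N D :
  H3_zero mR mS f -> deformation_upto N D -> exists c, extension N D c.
Proof.
move=> H3 [R0 S0 F0 D_ml _ coef].
have R_ml i : ml2 (famR D i) by case: (D_ml i).
have S_ml i : ml2 (famS D i) by case: (D_ml i).
have F_lin i : lin (famF D i) by case: (D_ml i).
have R_biadd i := ml2_biadditive (R_ml i).
have S_biadd i := ml2_biadditive (S_ml i).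
have F_add i := linD (F_lin i).
have lowR p u v w : (p <= N)%N -> zinb_assoc_coef (famR D) p u v w = 0.
  by move=> /coef[].
have lowS p u v w : (p <= N)%N -> zinb_assoc_coef (famS D) p u v w = 0.
  by move=> /coef[].
have lowF p u v : (p <= N)%N -> morph_defect_coef (famR D) (famS D) (famF D) p u v = 0.
  by move=> /coef[].
have cocycleR := d3_zinb_assoc_coef R_biadd lowR; rewrite R0 in cocycleR.
have cocycleS := d3_zinb_assoc_coef S_biadd lowS; rewrite S0 in cocycleS.
have cocycleF := d2_morph_defect_coef R_biadd S_biadd F_add lowR lowS lowF.
rewrite R0 S0 F0 in cocycleF.
have [xi [pi [phi [xi_ml [pi_ml [phi_lin [d2xi [d2pi d1phi]]]]]]]] :=
  H3 _ _ _ (ml3_zinb_assoc_coef N.+1 R_ml) (ml3_zinb_assoc_coef N.+1 S_ml)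
     (ml2_morph_defect_coef N.+1 D_ml) cocycleR cocycleS cocycleF.
by exists (Cochain2 xi pi phi); split.
Qed.

Lemma deformation_of_coef0 D :
  famR D 0%N = mR -> famS D 0%N = mS -> famF D 0%N = f -> family_ml D ->
  (forall n, coef_identities n D) -> deformation mR mS f (famR D) (famS D) (famF D).
Proof.
move=> R0 S0 F0 D_ml coef; split=> //; split=> //; split=> //; split.
  by move=> i; have [] := D_ml i.
split; [|split] => n.
- move=> x y z; apply/eqP; rewrite -subr_eq0 -zinb_assoc_coefE; apply/eqP.
  by have [] := coef n.
- move=> x y z; apply/eqP; rewrite -subr_eq0 -zinb_assoc_coefE; apply/eqP.
  by have [] := coef n.
have [_ _ coefF] := coef n; move=> x y; apply/eqP; rewrite -subr_eq0; apply/eqP; exact: coefF.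
Qed.

Section Undeformed.
Hypotheses (mR_zinb : zinbiel mR) (mS_zinb : zinbiel mS) (f_morph : zinb_morph mR mS f).

Lemma deformation_upto_undeformed : deformation_upto 0 undeformed.
Proof.
case: mR_zinb mS_zinb f_morph => [mR_ml mR_assoc] [mS_ml mS_assoc] [f_lin f_mul].
have [set0R set0S set0F] := set_family_eq 0 (zero_family) (Cochain2 mR mS f).
split => // [i|i lt0i|n].
- have [-> | ne_i] := eqVneq i 0%N; first by rewrite set0R set0S set0F.
  have [-> -> ->] := set_family_ne zero_family (Cochain2 mR mS f) ne_i.
  by split; [apply: ml2_zero | apply: ml2_zero | apply: lin_zero].
- by have [-> -> ->] := set_family_ne zero_family (Cochain2 mR mS f) (lt0n_neq0 lt0i).
rewrite leqn0 => /eqP ->; split=> [x y z|x y z|x y];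
  rewrite /zinb_assoc_coef /morph_defect_coef !big_ord1 /= subnn /set_at eqxx /zinb_assoc.
- by rewrite mR_assoc; zmod_eq.
- by rewrite mS_assoc; zmod_eq.
- by rewrite f_mul subrr.
Qed.

Lemma undeformed_identities1 : coef_identities 1 undeformed.
Proof.
case: mR_zinb mS_zinb f_morph => [/ml2_biadditive mR_biadd _] [/ml2_biadditive mS_biadd _].
case=> /linD f_add _.
split=> [x y z|x y z|x y]; rewrite /zinb_assoc_coef /morph_defect_coef !big_ord_recr !big_ord0 /=;
  rewrite ?subn0 ?subnn /set_at eqxx /= /zinb_assoc.
- by rewrite !(biadd0l mR_biadd, biadd0r mR_biadd); zmod_eq.
- by rewrite !(biadd0l mS_biadd, biadd0r mS_biadd); zmod_eq.
by rewrite (additive0 f_add) !(biadd0l mS_biadd, biadd0r mS_biadd); zmod_eq.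
Qed.

Lemma extension_undeformed m1R m1S f1 :
  cocycle2 mR mS f m1R m1S f1 -> extension 0 undeformed (Cochain2 m1R m1S f1).
Proof.
case=> m1R_ml [m1S_ml [f1_lin [d2R [d2S d1F]]]]; have [coefR coefS coefF] := undeformed_identities1.
by split=> //= [x y z|x y z|x y]; rewrite ?d2R ?coefR ?d2S ?coefS ?d1F ?coefF ?oppr0.
Qed.

Section Limit.
Variables (m1R : R -> R -> R) (m1S : S -> S -> S) (f1 : R -> S).
Hypothesis m1_cocycle : cocycle2 mR mS f m1R m1S f1.
Hypothesis H3 : H3_zero mR mS f.

Definition next_cochain2 N D : cochain2 := epsilon (inhabits (Cochain2 mR mS f)) (extension N D).

Fixpoint partial_deformation n : family :=
  if n is n'.+1 then
    set_family n.+1 (partial_deformation n') (next_cochain2 n (partial_deformation n'))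
  else set_family 1 undeformed (Cochain2 m1R m1S f1).

Lemma partial_deformation_upto n : deformation_upto n.+1 (partial_deformation n).
Proof.
elim: n => [|n IH] /=; apply: deformation_upto_set.
- exact: deformation_upto_undeformed.
- exact: extension_undeformed.
- exact: IH.
- by apply: epsilon_spec; apply: extension_exists.
Qed.

Lemma partial_deformation_stable n m i : (n <= m)%N -> (i <= n.+1)%N ->
  [/\ famR (partial_deformation m) i = famR (partial_deformation n) i,
      famS (partial_deformation m) i = famS (partial_deformation n) i
    & famF (partial_deformation m) i = famF (partial_deformation n) i].
Proof.
elim: m => [|m IH]; first by rewrite leqn0 => /eqP ->.
rewrite leq_eqVlt ltnS => /orP[/eqP -> // | le_nm] le_in.
have [<- <- <-] := IH le_nm le_in; apply: set_family_ne.
by rewrite neq_ltn; apply/orP; left; lia.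
Qed.

Definition limit_family : family :=
  Family (fun i => famR (partial_deformation i) i) (fun i => famS (partial_deformation i) i)
         (fun i => famF (partial_deformation i) i).

Lemma limit_family_identities n : coef_identities n limit_family.
Proof.
apply: coef_identities_eq (fam_coef (partial_deformation_upto n) (leqnSn n)) => i le_in.
by have [-> -> ->] := partial_deformation_stable le_in (leqnSn i).
Qed.

Lemma limit_family_deformation :
  deformation mR mS f (famR limit_family) (famS limit_family) (famF limit_family).
Proof.
have [R0 S0 F0 _ _ _] := partial_deformation_upto 0.
apply: deformation_of_coef0 => //; last exact: limit_family_identities.
by move=> i; apply: (fam_ml (partial_deformation_upto i)).
Qed.

End Limit.

End Undeformed.

End Construction.

Theorem corollary5p3 (K : fieldType) (R S : lmodType K)
  (mR : R -> R -> R) (mS : S -> S -> S) (f : R -> S) :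
  zinbiel mR -> zinbiel mS -> zinb_morph mR mS f ->
  H3_zero mR mS f ->
  forall (m1R : R -> R -> R) (m1S : S -> S -> S) (f1 : R -> S),
    cocycle2 mR mS f m1R m1S f1 ->
    exists (MR : nat -> R -> R -> R) (MS : nat -> S -> S -> S) (F : nat -> R -> S),
      deformation mR mS f MR MS F /\ MR 1%N = m1R /\ MS 1%N = m1S /\ F 1%N = f1.
Proof.
move=> mR_zinb mS_zinb f_morph H3 m1R m1S f1 m1_cocycle.
pose D := limit_family mR mS f m1R m1S f1.
exists (famR D), (famS D), (famF D).
by split; first exact: limit_family_deformation.
Qed.
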